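(* Let the data $y\in\mathbb{R}^n$, $X\in\mathbb{R}^{n\times p}$, $Z\in\mathbb{R}^{n\times q}$ be fixed, with $Z^TZ$ and $X^TP_ZX$ non-singular, and thin SVDs $X=U_X\Sigma_XV_X^T$, $Z=U_Z\Sigma_ZV_Z^T$. Let $\widehat e=y-X\widehat\beta_{2SLS}$ with $\widehat\beta_{2SLS}=(X^TP_ZX)^{-1}X^TP_Zy$, and let $\Pi\in\mathbb{R}^{m\times n}$ be random. Given $\varepsilon_1,\varepsilon_2,\varepsilon_3,\delta\in(0,1/2)$, suppose that jointly with probability at least $1-\delta$: $\|U_Z^T\Pi^T\Pi U_Z-I_q\|_2\le\varepsilon_1$, $\|U_Z^T\Pi^T\Pi U_X-U_Z^TU_X\|_2\le\varepsilon_2$, $\|U_Z^T\Pi^T\Pi\widehat e-U_Z^T\widehat e\|\le\varepsilon_3\|\widehat e\|$; and that $\sigma_{\min}^2(U_Z^TU_X)\ge 2f_1(\varepsilon_1,\varepsilon_2)$. Let $\widetilde A:=U_X^T\Pi^T\Pi U_Z(U_Z^T\Pi^T\Pi U_Z)^{-1}U_Z^T\Pi^T\Pi U_X$ and $\widehat A:=U_X^TU_ZU_Z^TU_X$. Then with probability at least $1-\delta$, $$\|\widetilde A^{-1}-\widehat A^{-1}\|_2\le\frac{2f_1(\varepsilon_1,\varepsilon_2)}{\sigma_{\min}^4(U_Z^TU_X)}.$$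
   Context: $P_Z=Z(Z^TZ)^{-1}Z^T$; $f_1(\varepsilon_1,\varepsilon_2):=[\varepsilon_1+\varepsilon_2(\varepsilon_2+2)]/(1-\varepsilon_1)$. $\|\cdot\|_2$ is the spectral norm, $\sigma_{\min}$ the smallest singular value. *)

From HB Require Import structures.
From mathcomp Require Import all_boot all_order all_algebra.
From mathcomp Require Import all_classical all_reals all_analysis.
Set Implicit Arguments. Unset Strict Implicit. Unset Printing Implicit Defensive.
Import Order.TTheory GRing.Theory Num.Theory.
Local Open Scope classical_set_scope.
Local Open Scope ring_scope.

Definition vnorm {R : realType} {n : nat} (v : 'cV[R]_n) : R :=
  Num.sqrt (\sum_(i < n) v i 0 ^+ 2).

Definition spec_norm {R : realType} {m n : nat} (A : 'M[R]_(m, n)) : R :=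
  sup [set vnorm (A *m x) | x in [set x : 'cV[R]_n | vnorm x <= 1]].

Definition sigma_min {R : realType} {m n : nat} (A : 'M[R]_(m, n)) : R :=
  inf [set vnorm (A *m x) | x in [set x : 'cV[R]_n | vnorm x = 1]].

Definition projmx {R : realType} {n q : nat} (Z : 'M[R]_(n, q)) : 'M[R]_n :=
  Z *m invmx (Z^T *m Z) *m Z^T.

Definition f1 {R : realType} (e1 e2 : R) : R :=
  (e1 + e2 * (e2 + 2)) / (1 - e1).

Definition thin_svd {R : realType} {n r : nat} (A : 'M[R]_(n, r))
    (U : 'M[R]_(n, r)) (S : 'M[R]_r) (V : 'M[R]_r) : Prop :=
  [/\ A = U *m S *m V^T, U^T *m U = 1%:M, V^T *m V = 1%:M,
      is_diag_mx S & forall i, 0 <= S i i].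

From HB Require Import structures.
From mathcomp Require Import all_boot all_order all_algebra.
From mathcomp Require Import all_classical all_reals all_analysis.
From mathcomp Require Import ring lra.
Set Implicit Arguments. Unset Strict Implicit. Unset Printing Implicit Defensive.
Import Order.TTheory GRing.Theory Num.Theory.
Local Open Scope classical_set_scope.
Local Open Scope ring_scope.

(* Put B = U_Z^T U_X, C = U_Z^T Pi^T Pi U_X and M = U_Z^T Pi^T Pi U_Z, so that
   Ahat = B^T B and Atil = C^T M^-1 C.  On the good event ||M - I|| <= e1 and
   ||C - B|| <= e2, and B is a contraction, so ||Atil - Ahat|| <= f1 e1 e2 <= s^2/2
   with s = sigma_min B.  Hence Ahat and Atil are bounded below by s^2 and s^2/2, and
   the resolvent identity Atil^-1 - Ahat^-1 = Atil^-1 (Ahat - Atil) Ahat^-1 gives the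
   bound (2/s^2) f1 (1/s^2). *)

Section EuclideanNorm.
Context {R : realType}.

Definition vdot {n} (u v : 'cV[R]_n) : R := (u^T *m v) 0 0.

Lemma vdotE {n} (u v : 'cV[R]_n) : vdot u v = \sum_i u i 0 * v i 0.
Proof. by rewrite /vdot mxE; apply: eq_bigr => i _; rewrite mxE. Qed.

Lemma vdotC {n} (u v : 'cV[R]_n) : vdot u v = vdot v u.
Proof. by rewrite !vdotE; apply: eq_bigr => i _; rewrite mulrC. Qed.

Lemma vdotDr {n} (u v w : 'cV[R]_n) : vdot u (v + w) = vdot u v + vdot u w.
Proof. by rewrite /vdot mulmxDr mxE. Qed.

Lemma vdotNr {n} (u v : 'cV[R]_n) : vdot u (- v) = - vdot u v.
Proof. by rewrite /vdot mulmxN mxE. Qed.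

Lemma vdotZr {n} a (u v : 'cV[R]_n) : vdot u (a *: v) = a * vdot u v.
Proof. by rewrite /vdot -scalemxAr mxE. Qed.

Lemma vdotBr {n} (u v w : 'cV[R]_n) : vdot u (v - w) = vdot u v - vdot u w.
Proof. by rewrite vdotDr vdotNr. Qed.

Lemma vdotDl {n} (u v w : 'cV[R]_n) : vdot (v + w) u = vdot v u + vdot w u.
Proof. by rewrite vdotC vdotDr !(vdotC u). Qed.

Lemma vdotBl {n} (u v w : 'cV[R]_n) : vdot (v - w) u = vdot v u - vdot w u.
Proof. by rewrite vdotC vdotBr !(vdotC u). Qed.

Lemma vdotZl {n} a (u v : 'cV[R]_n) : vdot (a *: v) u = a * vdot v u.
Proof. by rewrite vdotC vdotZr vdotC. Qed.

Lemma vdot_mulmxr {m n} (A : 'M[R]_(m, n)) u v : vdot u (A *m v) = vdot (A^T *m u) v.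
Proof. by rewrite /vdot trmx_mul trmxK mulmxA. Qed.

Lemma vdot_ge0 {n} (u : 'cV[R]_n) : 0 <= vdot u u.
Proof. by rewrite vdotE sumr_ge0 // => i _; rewrite -expr2 sqr_ge0. Qed.

Lemma vdot_eq0 {n} (u : 'cV[R]_n) : vdot u u = 0 -> u = 0.
Proof.
rewrite vdotE => /eqP; rewrite psumr_eq0 => [/allP u0|i _]; last first.
  by rewrite -expr2 sqr_ge0.
apply/matrixP => i j; rewrite (ord1 j) mxE.
by have /implyP/(_ isT) := u0 i (mem_index_enum _); rewrite mulf_eq0 orbb => /eqP.
Qed.

Lemma vdot_sqr_le {n} (u v : 'cV[R]_n) : vdot u v ^+ 2 <= vdot u u * vdot v v.
Proof.
have [v0|v_neq0] := eqVneq (vdot v v) 0.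
  by rewrite v0 (vdot_eq0 v0) /vdot mulmx0 mxE expr0n /= mulr0.
have v_gt0 : 0 < vdot v v by rewrite lt0r v_neq0 vdot_ge0.
have := vdot_ge0 (vdot v v *: u - vdot u v *: v).
rewrite !(vdotBl, vdotBr, vdotZl, vdotZr) (vdotC v u) => h.
have : 0 <= vdot v v * (vdot v v * vdot u u - vdot u v ^+ 2) by nra.
by rewrite pmulr_rge0 // subr_ge0; nra.
Qed.

Lemma vnormE {n} (u : 'cV[R]_n) : vnorm u = Num.sqrt (vdot u u).
Proof. by rewrite /vnorm vdotE; congr Num.sqrt; apply: eq_bigr => i _; rewrite expr2. Qed.

Lemma vnorm_ge0 {n} (u : 'cV[R]_n) : 0 <= vnorm u.
Proof. by rewrite vnormE sqrtr_ge0. Qed.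

Lemma vnorm_sqr {n} (u : 'cV[R]_n) : vnorm u ^+ 2 = vdot u u.
Proof. by rewrite vnormE sqr_sqrtr // vdot_ge0. Qed.

Lemma vnorm_le_sqr {n} (u : 'cV[R]_n) c : 0 <= c -> vdot u u <= c ^+ 2 -> vnorm u <= c.
Proof. by move=> c0 h; rewrite vnormE -(ger0_norm c0) -sqrtr_sqr ler_sqrt // sqr_ge0. Qed.

Lemma vnorm0 {n} : vnorm (0 : 'cV[R]_n) = 0.
Proof. by rewrite vnormE /vdot mulmx0 mxE sqrtr0. Qed.

Lemma vnorm_eq0 {n} (u : 'cV[R]_n) : vnorm u = 0 -> u = 0.
Proof.
rewrite vnormE => /eqP; rewrite sqrtr_eq0 => u_le0.
by apply: vdot_eq0; apply/eqP; rewrite eq_le u_le0 vdot_ge0.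
Qed.

Lemma vnormN {n} (u : 'cV[R]_n) : vnorm (- u) = vnorm u.
Proof. by rewrite !vnormE vdotNr vdotC vdotNr opprK. Qed.

Lemma vnormZ {n} a (u : 'cV[R]_n) : vnorm (a *: u) = `|a| * vnorm u.
Proof. by rewrite !vnormE vdotZl vdotZr mulrA -expr2 sqrtrM ?sqr_ge0 // sqrtr_sqr. Qed.

Lemma vdot_le {n} (u v : 'cV[R]_n) : vdot u v <= vnorm u * vnorm v.
Proof.
have uv_ge0 : 0 <= vnorm u * vnorm v by rewrite mulr_ge0 ?vnorm_ge0.
have : vdot u v ^+ 2 <= (vnorm u * vnorm v) ^+ 2.
  by rewrite exprMn !vnorm_sqr vdot_sqr_le.
nra.
Qed.

Lemma vnormD {n} (u v : 'cV[R]_n) : vnorm (u + v) <= vnorm u + vnorm v.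
Proof.
apply: vnorm_le_sqr; first by rewrite addr_ge0 ?vnorm_ge0.
rewrite !(vdotDl, vdotDr) (vdotC v u) -!vnorm_sqr.
have := vdot_le u v; nra.
Qed.

Lemma vnorm_isometry {n k} (U : 'M[R]_(n, k)) x :
  U^T *m U = 1%:M -> vnorm (U *m x) = vnorm x.
Proof. by move=> UU; rewrite !vnormE vdot_mulmxr mulmxA UU mul1mx. Qed.

Lemma vnorm_normalize {n} (x : 'cV[R]_n) : vnorm x != 0 -> vnorm ((vnorm x)^-1 *: x) = 1.
Proof. by move=> x_neq0; rewrite vnormZ ger0_norm ?invr_ge0 ?vnorm_ge0 // mulVf. Qed.

End EuclideanNorm.

Section OperatorBounds.
Context {R : realType}.

Definition mx_bounded_by {m n} (A : 'M[R]_(m, n)) (c : R) :=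
  forall x, vnorm (A *m x) <= c * vnorm x.

Definition mx_bounded_below {m n} (A : 'M[R]_(m, n)) (c : R) :=
  forall x, c * vnorm x <= vnorm (A *m x).

Lemma mx_bounded_by_le {m n} (A : 'M[R]_(m, n)) a b :
  a <= b -> mx_bounded_by A a -> mx_bounded_by A b.
Proof. by move=> ab hA x; apply: le_trans (hA x) _; rewrite ler_wpM2r ?vnorm_ge0. Qed.

Lemma mx_bounded_byD {m n} (A B : 'M[R]_(m, n)) a b :
  mx_bounded_by A a -> mx_bounded_by B b -> mx_bounded_by (A + B) (a + b).
Proof.
move=> hA hB x; rewrite mulmxDl mulrDl.
by apply: le_trans (vnormD _ _) _; apply: lerD.
Qed.

Lemma mx_bounded_byN {m n} (A : 'M[R]_(m, n)) a :
  mx_bounded_by A a -> mx_bounded_by (- A) a.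
Proof. by move=> hA x; rewrite mulNmx vnormN. Qed.

Lemma mx_bounded_byM {m n k} (A : 'M[R]_(m, n)) (B : 'M[R]_(n, k)) a b :
  0 <= a -> mx_bounded_by A a -> mx_bounded_by B b -> mx_bounded_by (A *m B) (a * b).
Proof.
move=> a_ge0 hA hB x; rewrite -mulmxA -mulrA.
by apply: le_trans (hA _) _; apply: ler_wpM2l.
Qed.

Lemma mx_bounded_by_tr {m n} (A : 'M[R]_(m, n)) c :
  0 <= c -> mx_bounded_by A c -> mx_bounded_by A^T c.
Proof.
move=> c_ge0 hA y; set z := A^T *m y.
have z_sqr : vnorm z ^+ 2 <= c * vnorm y * vnorm z.
  rewrite vnorm_sqr {1}/z -vdot_mulmxr (mulrC c) -mulrA.
  by apply: le_trans (vdot_le _ _) _; rewrite ler_wpM2l ?vnorm_ge0 // mulrC.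
have [->|z_neq0] := eqVneq (vnorm z) 0; first by rewrite mulr_ge0 ?vnorm_ge0.
have z_gt0 : 0 < vnorm z by rewrite lt0r z_neq0 vnorm_ge0.
by rewrite -(ler_pM2r z_gt0) -expr2.
Qed.

Lemma mx_bounded_by_isometry {n k} (U : 'M[R]_(n, k)) :
  U^T *m U = 1%:M -> mx_bounded_by U 1.
Proof. by move=> UU x; rewrite vnorm_isometry // mul1r. Qed.

Lemma mx_bounded_below_le {m n} (A : 'M[R]_(m, n)) a b :
  a <= b -> mx_bounded_below A b -> mx_bounded_below A a.
Proof. by move=> ab hA x; apply: le_trans (hA x); rewrite ler_wpM2r ?vnorm_ge0. Qed.

Lemma mx_bounded_below_unit {n} (A : 'M[R]_n) c :
  0 < c -> mx_bounded_below A c -> A \in unitmx.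
Proof.
move=> c_gt0 hA; rewrite -unitmx_tr -row_free_unit -kermx_eq0; apply/eqP.
apply/row_matrixP => i; rewrite row0; set k := row i (kermx A^T).
have /(congr1 trmx) : k *m A^T = 0 by apply/sub_kermxP; exact: row_sub.
rewrite trmx_mul trmxK trmx0 => Ak0.
have : vnorm k^T = 0.
  apply/eqP; rewrite eq_le vnorm_ge0 andbT -(pmulr_rle0 _ c_gt0).
  by have := hA k^T; rewrite Ak0 vnorm0.
by move=> /vnorm_eq0 /(congr1 trmx); rewrite trmxK trmx0.
Qed.

Lemma mx_bounded_below_invmx {n} (A : 'M[R]_n) c :
  0 < c -> mx_bounded_below A c -> mx_bounded_by (invmx A) c^-1.
Proof.
move=> c_gt0 hA y; have uA := mx_bounded_below_unit c_gt0 hA.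
have := hA (invmx A *m y); rewrite mulKVmx // => h.
by rewrite mulrC ler_pdivlMr // mulrC.
Qed.

Lemma mx_bounded_below_of_form {n} (A : 'M[R]_n) c :
  (forall x, c * vdot x x <= vdot x (A *m x)) -> mx_bounded_below A c.
Proof.
move=> hA x; have := le_trans (hA x) (vdot_le _ _); rewrite -vnorm_sqr => h.
have [->|x_neq0] := eqVneq (vnorm x) 0; first by rewrite mulr0 vnorm_ge0.
have x_gt0 : 0 < vnorm x by rewrite lt0r x_neq0 vnorm_ge0.
by move: h; rewrite expr2 mulrA (mulrC _ (vnorm x)) ler_pM2l.
Qed.

Lemma spec_norm_bounded {m n} (A : 'M[R]_(m, n)) : mx_bounded_by A (spec_norm A).
Proof.
set S := [set vnorm (A *m x) | x in [set x : 'cV[R]_n | vnorm x <= 1]].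
have S_sup : has_sup S.
  split; first by exists 0, 0; rewrite /= ?mulmx0 vnorm0.
  exists (Num.sqrt (\sum_i vdot (row i A)^T (row i A)^T)) => _ [x /= x_le1 <-].
  apply: vnorm_le_sqr; first exact: sqrtr_ge0.
  rewrite sqr_sqrtr ?sumr_ge0 // => [|i _]; last exact: vdot_ge0.
  rewrite vdotE; apply: ler_sum => i _.
  have -> : (A *m x) i 0 = vdot (row i A)^T x.
    by rewrite vdotE mxE; apply: eq_bigr => j _; rewrite !mxE.
  rewrite -expr2; apply: le_trans (vdot_sqr_le _ _) _.
  rewrite ler_piMr ?vdot_ge0 // -vnorm_sqr; have := vnorm_ge0 x; nra.
move=> x; have [x0|x_neq0] := eqVneq (vnorm x) 0.
  by rewrite x0 (vnorm_eq0 x0) mulmx0 vnorm0 mulr0.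
have x_gt0 : 0 < vnorm x by rewrite lt0r x_neq0 vnorm_ge0.
have /(sup_upper_bound S_sup) : S (vnorm (A *m ((vnorm x)^-1 *: x))).
  by exists ((vnorm x)^-1 *: x) => //=; rewrite vnorm_normalize.
rewrite -scalemxAr vnormZ ger0_norm ?invr_ge0 ?vnorm_ge0 //.
by rewrite mulrC ler_pdivrMr.
Qed.

Lemma spec_norm_le {m n} (A : 'M[R]_(m, n)) c :
  0 <= c -> mx_bounded_by A c -> spec_norm A <= c.
Proof.
move=> c_ge0 hA; apply: ge_sup; first by exists 0, 0; rewrite /= ?mulmx0 vnorm0.
by move=> _ [x /= x_le1 <-]; apply: le_trans (hA x) _; rewrite ler_piMr.
Qed.

Lemma sigma_min_ge0 {m n} (A : 'M[R]_(m, n)) : 0 <= sigma_min A.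
Proof.
rewrite /sigma_min; set S := [set _ | _ in _].
have [->|S_neq0] := eqVneq S set0; first by rewrite inf0.
by apply: lb_le_inf; [exact/set0P | move=> _ [x _ <-]; exact: vnorm_ge0].
Qed.

Lemma sigma_min_bounded_below {m n} (A : 'M[R]_(m, n)) :
  mx_bounded_below A (sigma_min A).
Proof.
move=> x; have [x0|x_neq0] := eqVneq (vnorm x) 0.
  by rewrite x0 mulr0 vnorm_ge0.
have x_gt0 : 0 < vnorm x by rewrite lt0r x_neq0 vnorm_ge0.
have S_lb : has_lbound [set vnorm (A *m x) | x in [set x : 'cV[R]_n | vnorm x = 1]].
  by exists 0 => _ [z _ <-]; exact: vnorm_ge0.
have /(ge_inf S_lb) : [set vnorm (A *m x) | x in [set x | vnorm x = 1]]
                        (vnorm (A *m ((vnorm x)^-1 *: x))).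
  by exists ((vnorm x)^-1 *: x) => //=; rewrite vnorm_normalize.
rewrite -scalemxAr vnormZ ger0_norm ?invr_ge0 ?vnorm_ge0 //.
by rewrite mulrC ler_pdivlMr.
Qed.

End OperatorBounds.

Section Perturbation.
Context {R : realType}.

Lemma mx_bounded_below_near1 {n} (M : 'M[R]_n) e :
  mx_bounded_by (M - 1%:M) e -> mx_bounded_below M (1 - e).
Proof.
move=> hM x; have := vnormD (- ((M - 1%:M) *m x)) (M *m x); have := hM x.
rewrite vnormN mulmxBl mul1mx opprB subrK.
lra.
Qed.

Lemma invmx_near1_bounded {n} (M : 'M[R]_n) e :
  e < 1 -> mx_bounded_by (M - 1%:M) e -> mx_bounded_by (invmx M - 1%:M) (e / (1 - e)).
Proof.
move=> e_lt1 hM; have e'_gt0 : 0 < 1 - e by lra.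
have hMinv := mx_bounded_below_invmx e'_gt0 (mx_bounded_below_near1 hM).
have uM := mx_bounded_below_unit e'_gt0 (mx_bounded_below_near1 hM).
have -> : invmx M - 1%:M = invmx M *m (- (M - 1%:M)).
  by rewrite mulmxN mulmxBr mulVmx // mulmx1 opprB.
rewrite mulrC; apply: mx_bounded_byM hMinv (mx_bounded_byN hM).
by rewrite invr_ge0 ltW.
Qed.

Lemma invmxB {n} (A B : 'M[R]_n) : A \in unitmx -> B \in unitmx ->
  invmx A - invmx B = invmx A *m (B - A) *m invmx B.
Proof. by move=> uA uB; rewrite mulmxBr mulVmx // mulmxBl mul1mx mulmxK. Qed.

(* [f1 e1 e2] is [(1 + e2)^2 e1/(1 - e1) + e2 (1 + e2) + e2], the sum of the bounds on
   [C^T (M^-1 - 1) C], [(C - B)^T C] and [B^T (C - B)]. *)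
Lemma gram_perturbation_bounded {p q} (B C : 'M[R]_(q, p)) (M : 'M[R]_q) e1 e2 :
  0 <= e1 < 1 -> 0 <= e2 ->
  mx_bounded_by B 1 -> mx_bounded_by (M - 1%:M) e1 -> mx_bounded_by (C - B) e2 ->
  mx_bounded_by (C^T *m invmx M *m C - B^T *m B) (f1 e1 e2).
Proof.
move=> /andP[e1_ge0 e1_lt1] e2_ge0 hB hM hCB.
have hC : mx_bounded_by C (1 + e2).
  by rewrite -(subrK B C) addrC; apply: mx_bounded_byD.
have -> : C^T *m invmx M *m C - B^T *m B =
    C^T *m (invmx M - 1%:M) *m C + ((C - B)^T *m C + B^T *m (C - B)).
  rewrite mulmxBr mulmx1 mulmxBl linearB /= !mulmxBl !mulmxBr.
  by rewrite !addrA subrK addrNK.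
have -> : f1 e1 e2 = (1 + e2) * (e1 / (1 - e1)) * (1 + e2) + (e2 * (1 + e2) + 1 * e2).
  by rewrite /f1; field; rewrite lt0r_neq0 // subr_gt0.
have e1'_ge0 : 0 <= e1 / (1 - e1) by rewrite divr_ge0 //; lra.
apply: mx_bounded_byD; last apply: mx_bounded_byD.
- apply: mx_bounded_byM (hC); first by rewrite mulr_ge0 //; lra.
  by apply: mx_bounded_byM (invmx_near1_bounded e1_lt1 hM);
    [lra | apply: mx_bounded_by_tr => //; lra].
- by apply: mx_bounded_byM hC => //; exact: mx_bounded_by_tr.
- by apply: mx_bounded_byM hCB => //; exact: mx_bounded_by_tr.
Qed.

Lemma gram_form_ge {m n} (B : 'M[R]_(m, n)) s : 0 <= s -> mx_bounded_below B s ->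
  forall x, s ^+ 2 * vdot x x <= vdot x (B^T *m B *m x).
Proof.
move=> s_ge0 hB x; rewrite -mulmxA vdot_mulmxr trmxK -!vnorm_sqr -exprMn.
by rewrite lerXn2r ?nnegrE ?mulr_ge0 ?vnorm_ge0.
Qed.

Lemma mx_bounded_below_addr {n} (A D : 'M[R]_n) a d :
  (forall x, a * vdot x x <= vdot x (A *m x)) -> mx_bounded_by D d ->
  mx_bounded_below (A + D) (a - d).
Proof.
move=> hA hD; apply: mx_bounded_below_of_form => x.
rewrite mulmxDl vdotDr mulrBl.
have : - vdot x (D *m x) <= vnorm x * vnorm (D *m x).
  by have := vdot_le (- x) (D *m x); rewrite vnormN vdotC vdotNr vdotC.
have : vnorm x * vnorm (D *m x) <= d * vdot x x.
  by rewrite -vnorm_sqr expr2 mulrCA ler_wpM2l ?vnorm_ge0 // mulrC.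
by have := hA x; lra.
Qed.

Lemma invmx_gram_perturbation {p q} (B C : 'M[R]_(q, p)) (M : 'M[R]_q) e1 e2 s :
  0 <= e1 < 1 -> 0 <= e2 -> 0 < s ->
  mx_bounded_by B 1 -> mx_bounded_by (M - 1%:M) e1 -> mx_bounded_by (C - B) e2 ->
  mx_bounded_below B s -> 2 * f1 e1 e2 <= s ^+ 2 ->
  mx_bounded_by (invmx (C^T *m invmx M *m C) - invmx (B^T *m B)) (2 * f1 e1 e2 / s ^+ 4).
Proof.
move=> e1_bd e2_ge0 s_gt0 hB hM hCB hBs hf.
set A := B^T *m B; set D := C^T *m invmx M *m C - A.
have hD : mx_bounded_by D (f1 e1 e2) by apply: gram_perturbation_bounded.
have f1_ge0 : 0 <= f1 e1 e2 by rewrite /f1 divr_ge0; case/andP: e1_bd; nra.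
have s2_gt0 : 0 < s ^+ 2 by rewrite exprn_gt0.
have s22_gt0 : 0 < s ^+ 2 / 2 by rewrite divr_gt0.
have hA := gram_form_ge (ltW s_gt0) hBs.
have hA_below := mx_bounded_below_of_form hA.
have hAD : mx_bounded_below (A + D) (s ^+ 2 / 2).
  by apply: mx_bounded_below_le (mx_bounded_below_addr hA hD); lra.
rewrite -[C^T *m _ *m C](subrK A) -/D (addrC D).
rewrite invmxB ?(mx_bounded_below_unit s22_gt0 hAD) ?(mx_bounded_below_unit s2_gt0 hA_below) //.
rewrite opprD addNKr.
have -> : 2 * f1 e1 e2 / s ^+ 4 = (s ^+ 2 / 2)^-1 * f1 e1 e2 * (s ^+ 2)^-1.
  by field; rewrite lt0r_neq0.
apply: mx_bounded_byM (mx_bounded_byM _ _ (mx_bounded_byN hD)) _.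
- by rewrite mulr_ge0 // invr_ge0 ltW.
- by rewrite invr_ge0 ltW.
- exact: mx_bounded_below_invmx.
- exact: mx_bounded_below_invmx.
Qed.

End Perturbation.

Theorem lemmaB6 (R : realType) (n p q m : nat)
  (y : 'cV[R]_n) (X : 'M[R]_(n, p)) (Z : 'M[R]_(n, q))
  (UX : 'M[R]_(n, p)) (SX : 'M[R]_p) (VX : 'M[R]_p)
  (UZ : 'M[R]_(n, q)) (SZ : 'M[R]_q) (VZ : 'M[R]_q)
  (hZZ : Z^T *m Z \in unitmx)
  (hXPX : X^T *m projmx Z *m X \in unitmx)
  (hsvdX : thin_svd X UX SX VX) (hsvdZ : thin_svd Z UZ SZ VZ)
  (d : measure_display) (T : measurableType d) (P : probability T R)
  (Pi : T -> 'M[R]_(m, n))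
  (e1 e2 e3 delta : R)
  (he1 : 0 < e1 < 1/2) (he2 : 0 < e2 < 1/2) (he3 : 0 < e3 < 1/2)
  (hdelta : 0 < delta < 1/2) :
  let beta := invmx (X^T *m projmx Z *m X) *m X^T *m projmx Z *m y in
  let e := y - X *m beta in
  let S := fun w => (Pi w)^T *m Pi w in
  (exists E : set T, [/\ measurable E, ((1 - delta)%:E <= P E)%E &
     forall w, E w ->
       [/\ spec_norm (UZ^T *m S w *m UZ - 1%:M) <= e1,
           spec_norm (UZ^T *m S w *m UX - UZ^T *m UX) <= e2 &
           vnorm (UZ^T *m S w *m e - UZ^T *m e) <= e3 * vnorm e]]) ->
  sigma_min (UZ^T *m UX) ^+ 2 >= 2 * f1 e1 e2 ->
  let Ahat := UX^T *m UZ *m UZ^T *m UX in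
  let Atil := fun w => UX^T *m S w *m UZ *m invmx (UZ^T *m S w *m UZ)
                        *m UZ^T *m S w *m UX in
  exists F : set T, [/\ measurable F, ((1 - delta)%:E <= P F)%E &
    forall w, F w ->
      spec_norm (invmx (Atil w) - invmx Ahat)
        <= 2 * f1 e1 e2 / sigma_min (UZ^T *m UX) ^+ 4].
Proof.
move=> beta e S [E [mE PE HE]] hs Ahat Atil; exists E; split => // w /HE [hM hCB _].
have [_ UXo _ _ _] := hsvdX; have [_ UZo _ _ _] := hsvdZ.
have [/andP[e1_gt0 e1_lt] /andP[e2_gt0 _]] := (he1, he2).
have f1_gt0 : 0 < f1 e1 e2 by rewrite /f1 divr_gt0 //; nra.
have s_gt0 : 0 < sigma_min (UZ^T *m UX).
  rewrite lt0r sigma_min_ge0 andbT; apply: contraTneq hs => ->; nra.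
have hB : mx_bounded_by (UZ^T *m UX) 1.
  rewrite -(mulr1 1); apply: mx_bounded_byM => //.
    exact/mx_bounded_by_tr/mx_bounded_by_isometry.
  exact: mx_bounded_by_isometry.
have -> : Atil w = (UZ^T *m S w *m UX)^T *m invmx (UZ^T *m S w *m UZ) *m (UZ^T *m S w *m UX).
  by rewrite /Atil /S !trmx_mul !trmxK !mulmxA.
have -> : Ahat = (UZ^T *m UX)^T *m (UZ^T *m UX) by rewrite /Ahat trmx_mul trmxK !mulmxA.
apply: spec_norm_le; first by rewrite divr_ge0 ?exprn_ge0 ?sigma_min_ge0 // mulr_ge0 ?ltW.
apply: invmx_gram_perturbation hB _ _ (sigma_min_bounded_below _) hs => //.
- by rewrite (ltW e1_gt0); lra.
- exact: ltW.
- exact: mx_bounded_by_le hM (spec_norm_bounded _).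
- exact: mx_bounded_by_le hCB (spec_norm_bounded _).
Qed.
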